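(* Let $G$ be a graph of diameter at most 3. If $G$ admits a tree 3-spanner, then $G$ admits a tree 3-spanner of diameter at most 5.
   Context: Graphs are finite, simple and loopless. The diameter of a graph is the maximum distance between pairs of its vertices. A tree 3-spanner of $G$ is a spanning subgraph $T$ of $G$ that is a tree and satisfies $d_T(a,b)\le 3\,d_G(a,b)$ for all vertices $a,b$ of $G$. *)

From mathcomp Require Import all_boot.
Set Implicit Arguments. Unset Strict Implicit. Unset Printing Implicit Defensive.

Section Graphs.
Variable V : finType.

Definition simple_graph (e : rel V) : Prop :=
  symmetric e /\ irreflexive e.

Definition walk (e : rel V) (x y : V) (n : nat) : Prop :=
  exists p : seq V, [/\ size p = n, path e x p & last x p = y].

Definition dist_le (e : rel V) (x y : V) (n : nat) : Prop :=
  exists m, m <= n /\ walk e x y m.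

Definition connected (e : rel V) : Prop :=
  forall x y : V, exists n, dist_le e x y n.

(* no cycle: no sequence of >= 3 distinct vertices x, p_1, ..., p_k
   forming a path that closes up with an edge back to x *)
Definition acyclic (e : rel V) : Prop :=
  forall (x : V) (p : seq V),
    uniq (x :: p) -> 2 <= size p -> path e x p -> ~~ e (last x p) x.

Definition diam_le (e : rel V) (k : nat) : Prop :=
  forall x y : V, dist_le e x y k.

Definition spanning_tree (e t : rel V) : Prop :=
  [/\ simple_graph t, subrel t e, connected t & acyclic t].

Definition tree_3_spanner (e t : rel V) : Prop :=
  spanning_tree e t /\
  forall (a b : V) (n : nat), dist_le e a b n -> dist_le t a b (3 * n).

End Graphs.

From mathcomp Require Import all_boot zify.
Set Implicit Arguments. Unset Strict Implicit. Unset Printing Implicit Defensive.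

(* Root a tree 3-spanner at a vertex c and encode it by its parent map and
   depths: the 3-spanner property then says that the ends of every edge of G
   reach a common ancestor in at most 3 steps in total.  If H is the height,
   the tree has diameter at most 2H, and at most 2H - 1 when all vertices of
   depth H lie in a single subtree of the root.  While this bound is at least 6
   it can be decreased.  A deepest leaf a whose siblings are leaves may be
   re-hung on its grandparent or great-grandparent whenever a is adjacent to it
   in G: the G-neighbours of a are its three nearest ancestors, its siblings and
   the children of its grandparent, and all of them stay within 3 steps.  A
   stuck leaf, adjacent to neither, has all its G-neighbours in its own branch
   at depth at least 2; as G has diameter at most 3, all stuck leaves of depth
   at least 3 lie in one branch.  Re-hanging the deepest leaves of the other
   branches, or, when all deepest vertices already lie in the stuck branch, its
   leaves of depth H - 1 in the other branches and then rerooting at the head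
   of the stuck branch, lowers the bound. *)

Section Walks.
Variable V : finType.
Implicit Types (e : rel V) (x y z : V).

Lemma walk_cat e x y z m n : walk e x y m -> walk e y z n -> walk e x z (m + n).
Proof.
move=> [p [p_size p_path p_last]] [q [q_size q_path q_last]].
exists (p ++ q); split; first by rewrite size_cat p_size q_size.
  by rewrite cat_path p_path p_last q_path.
by rewrite last_cat p_last q_last.
Qed.

Lemma dist_le_trans e x y z m n :
  dist_le e x y m -> dist_le e y z n -> dist_le e x z (m + n).
Proof.
move=> [m' [le_m w1]] [n' [le_n w2]]; exists (m' + n').
by split; [exact: leq_add | exact: walk_cat w1 w2].
Qed.

Lemma dist_leW e x y m n : m <= n -> dist_le e x y m -> dist_le e x y n.
Proof. by move=> le_mn [k [le_km w]]; exists k; split => //; apply: leq_trans le_mn. Qed.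

Lemma dist_le_refl e x n : dist_le e x x n.
Proof. by exists 0; split => //; exists [::]. Qed.

Lemma dist_le_edge e x y : e x y -> dist_le e x y 1.
Proof. by move=> exy; exists 1; split => //; exists [:: y]; rewrite /= exy. Qed.

Lemma dist_le_sym e x y n : symmetric e -> dist_le e x y n -> dist_le e y x n.
Proof.
move=> e_sym [k [le_kn [p [p_size p_path p_last]]]]; exists k; split => //.
exists (rev (belast x p)); split; first by rewrite size_rev size_belast.
  by rewrite -p_last rev_path; apply: sub_path p_path => a b /=; rewrite e_sym.
case: p p_size p_path p_last => [|a p] /= _ _ p_last; first by rewrite p_last.
by rewrite rev_cons last_rcons.
Qed.

Lemma dist_le_stretch e e' k x y n :
  (forall u v, e u v -> dist_le e' u v k) -> dist_le e x y n -> dist_le e' x y (k * n).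
Proof.
move=> stretch [m [le_mn [p [p_size p_path p_last]]]]; subst m y.
apply: (@dist_leW _ _ _ (k * size p)); first by rewrite leq_mul2l le_mn orbT.
clear le_mn; elim/last_ind: p p_path => [|p z IH]; first by move=> _; apply: dist_le_refl.
rewrite rcons_path size_rcons last_rcons mulnS addnC => /andP [p_path e_z].
exact: dist_le_trans (IH p_path) (stretch _ _ e_z).
Qed.

Lemma dist_le_sub e e' x y n : subrel e e' -> dist_le e x y n -> dist_le e' x y n.
Proof.
move=> sub_e d; rewrite -[n]mul1n.
by apply: dist_le_stretch d => u v /sub_e /dist_le_edge.
Qed.

End Walks.

Section ParentRelation.
Variables (V : finType) (par : V -> V).

Definition meets_within (x y : V) (m : nat) : Prop :=
  exists i j, i + j <= m /\ iter i par x = iter j par y.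

Definition parent_rel : rel V := fun x y => (x != y) && ((par x == y) || (par y == x)).

Lemma parent_rel_sym : symmetric parent_rel.
Proof. by move=> x y; rewrite /parent_rel eq_sym orbC. Qed.

Lemma parent_rel_irr : irreflexive parent_rel.
Proof. by move=> x; rewrite /parent_rel eqxx. Qed.

Lemma meets_within_sym x y m : meets_within x y m -> meets_within y x m.
Proof. by move=> [i [j [le_m meet]]]; exists j, i; rewrite addnC. Qed.

Lemma meets_withinW x y m n : m <= n -> meets_within x y m -> meets_within x y n.
Proof. by move=> le_mn [i [j [le_m meet]]]; exists i, j; split => //; lia. Qed.

Lemma dist_le_iter x k : dist_le parent_rel x (iter k par x) k.
Proof.
elim: k => [|k IH]; first exact: dist_le_refl.
rewrite iterS -addn1; set w := iter k par x in IH *.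
have [fixed|moved] := eqVneq (par w) w.
  by rewrite fixed; apply: dist_leW (leq_addr 1 k) IH.
by apply: dist_le_trans IH (dist_le_edge _); rewrite /parent_rel eq_sym moved eqxx.
Qed.

Lemma meets_within_step x y z m :
  meets_within x y m -> parent_rel y z -> meets_within x z m.+1.
Proof.
move=> [i [j [le_m meet]]] /andP [_ /orP [/eqP <-|/eqP y_z]].
- case: j le_m meet => [|j] le_m meet.
  + by exists i.+1, 0; split; [lia | rewrite iterS meet].
  + by exists i, j; split; [lia | rewrite meet iterSr].
- by exists i, j.+1; split; [lia | rewrite meet iterSr y_z].
Qed.

Lemma dist_le_parent_relP x y m : dist_le parent_rel x y m <-> meets_within x y m.
Proof.
split.
- move=> [k [le_km [p [p_size p_path p_last]]]]; subst k y.
  apply: meets_withinW le_km _.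
  elim/last_ind: p p_path => [|p z IH]; first by exists 0, 0.
  rewrite rcons_path size_rcons last_rcons => /andP [p_path e_z].
  exact: meets_within_step (IH p_path) e_z.
- move=> [i [j [le_m meet]]]; apply: dist_leW le_m _.
  have := dist_le_sym parent_rel_sym (dist_le_iter y j).
  by rewrite -meet; apply: dist_le_trans (dist_le_iter x i).
Qed.

End ParentRelation.

(** Rooted spanners *)

(* A spanning tree of [e] rooted at [c], encoded by its parent map (with
   [par c = c]) and its depth function; its edges are given by [parent_rel par]. *)
Definition rooted_spanner (V : finType) (e : rel V) (c : V) (par : V -> V)
    (dep : V -> nat) : Prop :=
  [/\ par c = c, dep c = 0,
      forall x, x != c -> dep x = (dep (par x)).+1 /\ e x (par x) &
      forall x y, e x y -> meets_within par x y 3].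

Definition height (V : finType) (dep : V -> nat) : nat := \max_(x : V) dep x.

(* The ancestor of [x] at depth 1; note that [branch c = c]. *)
Definition branch (V : finType) (par : V -> V) (dep : V -> nat) (x : V) : V :=
  iter (dep x).-1 par x.

Definition two_deep_branches (V : finType) (par : V -> V) (dep : V -> nat) : bool :=
  [exists a, exists b, [&& dep a == height dep, dep b == height dep
                         & branch par dep a != branch par dep b]].

Definition diam_bound (V : finType) (par : V -> V) (dep : V -> nat) : nat :=
  if two_deep_branches par dep then (height dep).*2 else (height dep).*2.-1.

Lemma diam_bound_le (V : finType) (par : V -> V) (dep : V -> nat) :
  diam_bound par dep <= (height dep).*2.
Proof. by rewrite /diam_bound; case: ifP => _ //; rewrite leq_pred. Qed.

Lemma diam_bound_ge (V : finType) (par : V -> V) (dep : V -> nat) :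
  (height dep).*2.-1 <= diam_bound par dep.
Proof. by rewrite /diam_bound; case: ifP => _ //; rewrite leq_pred. Qed.

Lemma diam_bound_one_branch (V : finType) (par : V -> V) (dep : V -> nat) h b :
  height dep <= h -> (forall x, dep x = h -> branch par dep x = b) ->
  diam_bound par dep <= h.*2.-1.
Proof.
move=> le_h top_b; have [lt_h|ge_h] := ltnP (height dep) h.
  by apply: leq_trans (diam_bound_le _ _) _; rewrite -!muln2; lia.
have eq_h : height dep = h by apply/eqP; rewrite eqn_leq le_h ge_h.
rewrite /diam_bound eq_h; case: ifP => // /existsP [x /existsP [y]].
by rewrite eq_h => /and3P [/eqP/top_b -> /eqP/top_b ->]; rewrite eqxx.
Qed.

Section RootedSpanner.
Variables (V : finType) (e : rel V) (c : V) (par : V -> V) (dep : V -> nat).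
Hypothesis rs : rooted_spanner e c par dep.

Lemma rs_par_root : par c = c. Proof. by case: rs. Qed.
Lemma rs_dep_root : dep c = 0. Proof. by case: rs. Qed.
Lemma rs_dep x : x != c -> dep x = (dep (par x)).+1.
Proof. by case: rs => _ _ par_dep _ /par_dep []. Qed.
Lemma rs_edge x : x != c -> e x (par x).
Proof. by case: rs => _ _ par_dep _ /par_dep []. Qed.
Lemma rs_meets x y : e x y -> meets_within par x y 3.
Proof. by case: rs => _ _ _; apply. Qed.

Lemma dep_eq0 x : dep x = 0 -> x = c.
Proof. by have [//|/rs_dep ->] := eqVneq x c. Qed.

Lemma dep_gt0 x : 0 < dep x -> x != c.
Proof. by apply: contraTneq => ->; rewrite rs_dep_root. Qed.

Lemma dep_par x : dep (par x) = (dep x).-1.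
Proof.
have [->|x_neq] := eqVneq x c; first by rewrite rs_par_root rs_dep_root.
by rewrite (rs_dep x_neq).
Qed.

Lemma dep_iter k x : dep (iter k par x) = dep x - k.
Proof. by elim: k => [|k IH]; rewrite ?subn0 // iterS dep_par IH subnS. Qed.

Lemma iter_dep_ge x k : dep x <= k -> iter k par x = c.
Proof. by move=> le_k; apply: dep_eq0; rewrite dep_iter; apply/eqP; rewrite subn_eq0. Qed.

Lemma iter_dep x : iter (dep x) par x = c.
Proof. exact: iter_dep_ge. Qed.

Lemma parent_rel_dep x y : parent_rel par x y ->
  (par x = y /\ dep x = (dep y).+1) \/ (par y = x /\ dep y = (dep x).+1).
Proof.
move=> /andP [x_neq_y /orP [/eqP par_x|/eqP par_y]].
- left; split => //; rewrite rs_dep -?par_x //.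
  by apply: contra x_neq_y => /eqP x_c; rewrite -par_x x_c rs_par_root.
- right; split => //; rewrite rs_dep -?par_y //.
  by apply: contra x_neq_y => /eqP y_c; rewrite -par_y y_c rs_par_root.
Qed.

Lemma parent_rel_down x y : parent_rel par x y -> dep y <= dep x -> y = par x.
Proof. by move=> /parent_rel_dep [[-> _]|[_ ->]] //; rewrite ltnn. Qed.

(* On a cycle, a vertex of maximal depth would have two distinct neighbours
   that are both its parent. *)
Lemma parent_rel_acyclic : acyclic (parent_rel par).
Proof.
move=> x p uniq_p size_p path_p; apply/negP => closing.
have cyc : cycle (parent_rel par) (x :: p) by rewrite /= rcons_path path_p closing.
have [v v_in v_max] := @arg_maxnP V x [pred y | y \in x :: p] dep (mem_head x p).
have [i q rot_q] := rot_to v_in.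
have cyc_q : cycle (parent_rel par) (v :: q) by rewrite -rot_q rot_cycle.
have uniq_q : uniq (v :: q) by rewrite -rot_q rot_uniq.
have size_q : size q = size p by have := congr1 size rot_q; rewrite size_rot => -[].
have q_max y : y \in q -> dep y <= dep v.
  by move=> y_q; apply: v_max; rewrite /= -(mem_rot i) rot_q inE y_q orbT.
clear rot_q; case: q size_q cyc_q uniq_q q_max => [|u [|w q]] size_q;
  try by rewrite -size_q in size_p.
rewrite /= rcons_path => /and3P [e_vu _ /andP [_ e_zv]] /and3P [_ u_notin _] q_max.
set z := last w q in e_zv.
have u_par : u = par v by apply: parent_rel_down e_vu _; apply: q_max; rewrite mem_head.
have z_par : z = par v.
  apply: parent_rel_down; first by rewrite parent_rel_sym.
  by apply: q_max; rewrite inE mem_last orbT.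
by move: u_notin; rewrite u_par -z_par mem_last.
Qed.

Lemma parent_rel_connected : connected (parent_rel par).
Proof.
move=> x y; exists (dep x + dep y); apply/dist_le_parent_relP.
by exists (dep x), (dep y); rewrite !iter_dep.
Qed.

Lemma parent_rel_diam : diam_le (parent_rel par) (diam_bound par dep).
Proof.
move=> x y; apply/dist_le_parent_relP.
have dep_x : dep x <= height dep := leq_bigmax x.
have dep_y : dep y <= height dep := leq_bigmax y.
have [le_sum|gt_sum] := leqP (dep x + dep y) (diam_bound par dep).
  by exists (dep x), (dep y); rewrite !iter_dep.
move: gt_sum; rewrite /diam_bound; case: ifP => [_|one_branch]; first by rewrite -!muln2; lia.
rewrite -!muln2 => gt_sum.
have top_x : dep x = height dep by lia.
have top_y : dep y = height dep by lia.
have same : branch par dep x = branch par dep y.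
  apply/eqP; apply: contraFT one_branch => diff.
  by apply/existsP; exists x; apply/existsP; exists y; rewrite top_x top_y eqxx diff.
exists (dep x).-1, (dep y).-1; split; first lia.
exact: same.
Qed.

Hypothesis e_sym : symmetric e.

Lemma parent_rel_sub : subrel (parent_rel par) e.
Proof.
move=> x y /parent_rel_dep [[<- dep_x]|[<- dep_y]].
- by apply: rs_edge; apply: dep_gt0; rewrite dep_x.
- by rewrite e_sym; apply: rs_edge; apply: dep_gt0; rewrite dep_y.
Qed.

Lemma parent_rel_spanner : tree_3_spanner e (parent_rel par).
Proof.
split; last by move=> a b n; apply: dist_le_stretch => u v /rs_meets/dist_le_parent_relP.
split; last exact: parent_rel_acyclic.
- by split; [exact: parent_rel_sym | exact: parent_rel_irr].
- exact: parent_rel_sub.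
- exact: parent_rel_connected.
Qed.

End RootedSpanner.

(** Branches and leaves *)

Definition leaf (V : finType) (par : V -> V) (a : V) : Prop := forall z, par z != a.

Definition leaf_siblings (V : finType) (par : V -> V) (a : V) : Prop :=
  forall z, par z = par a -> leaf par z.

Definition stuck (V : finType) (e : rel V) (par : V -> V) (a : V) : bool :=
  ~~ e a (par (par a)) && ~~ e a (par (par (par a))).

Section Branches.
Variables (V : finType) (e : rel V) (c : V) (par : V -> V) (dep : V -> nat).
Hypothesis rs : rooted_spanner e c par dep.
Hypothesis e_irr : irreflexive e.
Local Notation branch := (branch par dep).

Lemma branch_par x : 0 < dep (par x) -> branch (par x) = branch x.
Proof.
move=> dep_par_gt0; have x_neq : x != c.
  by apply: contraTneq dep_par_gt0 => ->; rewrite (rs_par_root rs) (rs_dep_root rs).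
rewrite /branch (rs_dep rs x_neq) /=.
by case: (dep (par x)) dep_par_gt0 => // n _; rewrite iterSr.
Qed.

Lemma branch_iter k x : 0 < dep (iter k par x) -> branch (iter k par x) = branch x.
Proof.
elim: k => [//|k IH]; rewrite iterS => dep_gt0.
rewrite branch_par // IH //; move: dep_gt0; rewrite (dep_par rs); lia.
Qed.

Lemma dep_branch x : x != c -> dep (branch x) = 1.
Proof. by move=> /(rs_dep rs) dep_x; rewrite /branch (dep_iter rs) dep_x; lia. Qed.

Lemma par_branch x : x != c -> par (branch x) = c.
Proof.
move=> x_neq; have dep_x : 0 < dep x by rewrite (rs_dep rs x_neq).
by rewrite /branch -iterS prednK // (iter_dep rs).
Qed.

Lemma branch_root : branch c = c.
Proof. by rewrite /branch (rs_dep_root rs). Qed.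

(* The tree path between the ends of such an edge passes through the root. *)
Lemma edge_branch_neq x y : e x y -> branch x != branch y -> dep x + dep y <= 3.
Proof.
move=> /(rs_meets rs) [i [j [le3 meet]]] diff.
have [dep_meet0|dep_meet_gt0] := leqP (dep (iter i par x)) 0.
  have : dep (iter j par y) <= 0 by rewrite -meet.
  by move: dep_meet0; rewrite !(dep_iter rs); lia.
move: diff; rewrite -(branch_iter dep_meet_gt0) meet branch_iter ?eqxx //.
by rewrite -meet.
Qed.

Lemma sibling x z : 1 < dep x -> par z = par x -> dep z = dep x /\ branch z = branch x.
Proof.
move=> dep_x par_z.
have x_neq : x != c by apply: (dep_gt0 rs); lia.
have dep_par_x : 0 < dep (par x) by move: dep_x; rewrite (rs_dep rs x_neq).
have z_neq : z != c.
  apply: contraTneq dep_par_x => z_c; move: par_z; rewrite z_c (rs_par_root rs) => <-.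
  by rewrite (rs_dep_root rs).
split; first by rewrite (rs_dep rs z_neq) (rs_dep rs x_neq) par_z.
by rewrite -(branch_par (x := z)) par_z ?branch_par.
Qed.

Lemma leaf_neighbour a z : leaf_siblings par a -> e a z ->
  z = par a \/ z = par (par a) \/ z = par (par (par a)) \/
  par z = par a \/ par z = par (par a).
Proof.
move=> leaves a_z; have [i [j [le3 meet]]] := rs_meets rs a_z.
have a_leaf := leaves a erefl.
have no_child w : par w = a -> False by move=> par_w; have := a_leaf w; rewrite par_w eqxx.
case: i j le3 meet => [|[|[|[|i]]]] [|[|[|[|j]]]] //= le3 meet; try lia.
all: first [ by move: a_z; rewrite meet e_irr
           | by exfalso; apply: (no_child _ (esym meet))
           | by exfalso; have := leaves _ (esym meet) z; rewrite eqxx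
           | by left | by right; left | by right; right; left
           | by right; right; right; left | by right; right; right; right ].
Qed.

Lemma stuck_neighbour a z : 2 < dep a -> leaf_siblings par a -> stuck e par a ->
  e a z -> 1 < dep z /\ branch z = branch a.
Proof.
move=> dep_a leaves /andP [not_par2 not_par3] a_z.
have dep1 := dep_iter rs 1 a; have dep2 := dep_iter rs 2 a; simpl in dep1, dep2.
have [->|[z_par2|[z_par3|[par_z|par_z]]]] := leaf_neighbour leaves a_z.
- by split; [lia | rewrite branch_par //; lia].
- by move: not_par2; rewrite -z_par2 a_z.
- by move: not_par3; rewrite -z_par3 a_z.
- have dep_a_gt1 : 1 < dep a by lia.
  by have [dep_z ->] := sibling dep_a_gt1 par_z; split => //; lia.
- have z_neq : z != c.
    apply/eqP => z_c; move: dep2; rewrite -par_z z_c (rs_par_root rs) (rs_dep_root rs).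
    lia.
  have dep_z : dep z = dep a - 1 by rewrite (rs_dep rs z_neq) par_z; lia.
  split; first by lia.
  rewrite -(branch_par (x := z)) par_z ?branch_par //; lia.
Qed.

Lemma stuck_same_branch a b : diam_le e 3 -> symmetric e ->
  2 < dep a -> leaf_siblings par a -> stuck e par a ->
  2 < dep b -> leaf_siblings par b -> stuck e par b -> branch a = branch b.
Proof.
move=> e_diam e_sym dep_a leaves_a stuck_a dep_b leaves_b stuck_b.
apply/eqP; apply/negPn/negP => diff.
have [m [le3 [p [size_p path_p last_p]]]] := e_diam a b.
case: p size_p path_p last_p => [|w1 [|w2 [|w3 [|w4 p]]]] //= size_p path_p last_p; try lia.
- by move: diff; rewrite last_p eqxx.
- by move: path_p; rewrite andbT last_p => /edge_branch_neq/(_ diff); lia.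
- move: path_p => /and3P [a_w1 w1_b _]; rewrite last_p in w1_b.
  have [dep_w1 branch_w1] := stuck_neighbour dep_a leaves_a stuck_a a_w1.
  by have := edge_branch_neq w1_b; rewrite branch_w1 => /(_ diff); lia.
- move: path_p => /and4P [a_w1 w1_w2 w2_b _]; rewrite last_p e_sym in w2_b.
  have [dep_w1 branch_w1] := stuck_neighbour dep_a leaves_a stuck_a a_w1.
  have [dep_w2 branch_w2] := stuck_neighbour dep_b leaves_b stuck_b w2_b.
  by have := edge_branch_neq w1_w2; rewrite branch_w1 branch_w2 => /(_ diff); lia.
Qed.

End Branches.

(** Re-hanging deep leaves *)

Definition reattach_point (V : finType) (e : rel V) (par : V -> V) (a : V) : V :=
  if e a (par (par a)) then par (par a) else par (par (par a)).

Definition reattach_par (V : finType) (e : rel V) (par : V -> V) (M : pred V) (x : V) : V :=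
  if M x then reattach_point e par x else par x.

Definition reattach_dep (V : finType) (e : rel V) (par : V -> V) (dep : V -> nat)
    (M : pred V) (x : V) : nat :=
  if M x then (dep (reattach_point e par x)).+1 else dep x.

Definition level (V : finType) (par : V -> V) (dep : V -> nat) (h : nat) (keep : pred V) :
    pred V :=
  [pred a | (dep a == h) && keep (branch par dep a)].

Section Reattach.
Variables (V : finType) (e : rel V) (c : V) (par : V -> V) (dep : V -> nat).
Hypothesis rs : rooted_spanner e c par dep.
Hypotheses (e_irr : irreflexive e) (e_sym : symmetric e).
Variables (h : nat) (keep : pred V).
Hypothesis h_ge3 : 3 <= h.
Local Notation M := (level par dep h keep).
Hypothesis M_leaf : forall a, M a -> leaf par a.
Hypothesis M_free : forall a, M a -> ~~ stuck e par a.
Local Notation par' := (reattach_par e par M).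
Local Notation dep' := (reattach_dep e par dep M).

Lemma level_dep a : M a -> dep a = h.
Proof. by case/andP => /eqP. Qed.

Lemma level_sibling a z : M a -> par z = par a -> M z.
Proof.
move=> Ma par_z; have dep_a := level_dep Ma.
have [dep_z branch_z] : dep z = dep a /\ branch par dep z = branch par dep a.
  by apply: (sibling rs) par_z; lia.
by move: Ma; rewrite /level /= dep_z branch_z.
Qed.

Lemma level_leaf_siblings a : M a -> leaf_siblings par a.
Proof. by move=> Ma z /(level_sibling Ma)/M_leaf. Qed.

Lemma notM_par x : ~~ M (par x).
Proof. by apply/negP => /M_leaf/(_ x); rewrite eqxx. Qed.

Lemma notM_root : ~~ M c.
Proof. by rewrite -(rs_par_root rs) notM_par. Qed.

Lemma notM_point a : ~~ M (reattach_point e par a).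
Proof. by rewrite /reattach_point; case: ifP => _; apply: notM_par. Qed.

Lemma reattach_par_notM x : ~~ M x -> par' x = par x.
Proof. by rewrite /reattach_par => /negbTE ->. Qed.

Lemma reattach_dep_notM x : ~~ M x -> dep' x = dep x.
Proof. by rewrite /reattach_dep => /negbTE ->. Qed.

Lemma iter_reattach_par x k : ~~ M x -> iter k par' x = iter k par x.
Proof.
move=> notMx; elim: k => [//|k IH]; rewrite !iterS IH reattach_par_notM //.
by case: k {IH} => [|k] //=; apply: notM_par.
Qed.

Lemma dep_ancestors a : M a ->
  [/\ dep (par a) = h.-1, dep (par (par a)) = h.-2 & dep (par (par (par a))) = h - 3].
Proof. by move=> Ma; rewrite !(dep_par rs) (level_dep Ma); split; lia. Qed.

Lemma reattach_point_cases a :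
  reattach_point e par a = par (par a) \/ reattach_point e par a = par (par (par a)).
Proof. by rewrite /reattach_point; case: ifP; [left | right]. Qed.

Lemma reattach_point_edge a : M a -> e a (reattach_point e par a).
Proof.
by move/M_free; rewrite /stuck /reattach_point negb_and !negbK; case: ifP => // _ /= ->.
Qed.

Lemma meets_reattach x y : M x -> e x y -> meets_within par' x y 3.
Proof.
move=> Mx x_y.
have par'_x : par' x = reattach_point e par x by rewrite /reattach_par Mx.
have keep_par w : par' (par w) = par (par w) := reattach_par_notM (notM_par w).
have [dep1 dep2 dep3] := dep_ancestors Mx.
have [->|[->|[->|[par_y|par_y]]]] := leaf_neighbour rs e_irr (level_leaf_siblings Mx) x_y.
- case: (reattach_point_cases x) => point.
  + by exists 1, 1; rewrite /= par'_x point keep_par.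
  + by exists 1, 2; rewrite /= par'_x point !keep_par.
- case: (reattach_point_cases x) => point.
  + by exists 1, 0; rewrite /= par'_x point.
  + by exists 1, 1; rewrite /= par'_x point keep_par.
- case: (reattach_point_cases x) => point.
  + by exists 2, 0; rewrite /= par'_x point keep_par.
  + by exists 1, 0; rewrite /= par'_x point.
- have My : M y by apply: level_sibling Mx par_y.
  have par'_y : par' y = reattach_point e par y by rewrite /reattach_par My.
  case: (reattach_point_cases x) => point_x; case: (reattach_point_cases y);
    rewrite par_y => point_y.
  + by exists 1, 1; rewrite /= par'_x par'_y point_x point_y.
  + by exists 2, 1; rewrite /= par'_x par'_y point_x point_y keep_par.
  + by exists 1, 2; rewrite /= par'_x par'_y point_x point_y keep_par.
  + by exists 1, 1; rewrite /= par'_x par'_y point_x point_y.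
- have notMy : ~~ M y.
    by apply/negP => /dep_ancestors [dep_par_y _ _]; move: dep_par_y; rewrite par_y dep2; lia.
  have par'_y := reattach_par_notM notMy.
  case: (reattach_point_cases x) => point.
  + by exists 1, 1; rewrite /= par'_x point par'_y par_y.
  + by exists 1, 2; rewrite /= par'_x point par'_y par_y keep_par.
Qed.

Lemma reattach_spanner : rooted_spanner e c par' dep'.
Proof.
split.
- by rewrite reattach_par_notM ?notM_root // (rs_par_root rs).
- by rewrite reattach_dep_notM ?notM_root // (rs_dep_root rs).
- move=> x x_neq; have [Mx|notMx] := boolP (M x).
    rewrite /reattach_par /reattach_dep Mx (negbTE (notM_point x)).
    by split => //; apply: reattach_point_edge.
  rewrite reattach_par_notM // !reattach_dep_notM ?notM_par //.
  by split; [apply: (rs_dep rs) | apply: (rs_edge rs)].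
- move=> x y x_y; have [Mx|notMx] := boolP (M x); first exact: meets_reattach.
  have [My|notMy] := boolP (M y).
    by apply: meets_within_sym; apply: meets_reattach; rewrite // e_sym.
  have [i [j [le3 meet]]] := rs_meets rs x_y.
  by exists i, j; rewrite !iter_reattach_par.
Qed.

Lemma reattach_dep_lt x : M x -> dep' x < dep x.
Proof.
move=> Mx; rewrite /reattach_dep Mx (level_dep Mx).
have [dep1 dep2 dep3] := dep_ancestors Mx.
by case: (reattach_point_cases x) => ->; lia.
Qed.

Lemma reattach_dep_le x : dep' x <= dep x.
Proof. by have [/reattach_dep_lt/ltnW|/reattach_dep_notM ->] := boolP (M x). Qed.

Lemma branch_reattach x : ~~ M x -> branch par' dep' x = branch par dep x.
Proof. by move=> notMx; rewrite /branch reattach_dep_notM // iter_reattach_par. Qed.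

Lemma height_reattach : height dep' <= height dep.
Proof. by apply/bigmax_leqP => x _; apply: leq_trans (reattach_dep_le x) (leq_bigmax x). Qed.

End Reattach.

(** Rerooting at the head of a branch *)

Definition reroot_par (V : finType) (c a : V) (par : V -> V) (x : V) : V :=
  if x == a then a else if x == c then a else par x.

Definition reroot_dep (V : finType) (a : V) (par : V -> V) (dep : V -> nat) (x : V) : nat :=
  if branch par dep x == a then (dep x).-1 else (dep x).+1.

Section Reroot.
Variables (V : finType) (e : rel V) (c : V) (par : V -> V) (dep : V -> nat).
Hypothesis rs : rooted_spanner e c par dep.
Hypothesis e_sym : symmetric e.
Variable a : V.
Hypotheses (a_neq : a != c) (par_a : par a = c).

Lemma dep_head : dep a = 1.
Proof. by rewrite (rs_dep rs a_neq) par_a (rs_dep_root rs). Qed.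

Lemma branch_head : branch par dep a = a.
Proof. by rewrite /branch dep_head. Qed.

Lemma parent_rel_reroot : parent_rel (reroot_par c a par) =2 parent_rel par.
Proof.
move=> x y; rewrite /parent_rel /reroot_par.
have c_neq : c != a by rewrite eq_sym.
have [<-|x_neq_y] := eqVneq x y => //=.
have y_neq_x : y != x by rewrite eq_sym.
have [x_a|x_neq_a] := eqVneq x a.
  rewrite x_a in x_neq_y y_neq_x *; rewrite (negbTE x_neq_y) par_a /=.
  have [->|_] := eqVneq y c; first by rewrite (negbTE c_neq) !eqxx.
  by rewrite (negbTE y_neq_x).
have [x_c|x_neq_c] := eqVneq x c.
  rewrite x_c in x_neq_y y_neq_x x_neq_a *; rewrite (rs_par_root rs).
  have [->|_] := eqVneq y a; first by rewrite par_a !eqxx orbT.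
  by rewrite (negbTE y_neq_x) (negbTE x_neq_y).
have a_neq_x : a != x by rewrite eq_sym.
have c_neq_x : c != x by rewrite eq_sym.
have [->|_] := eqVneq y a; first by rewrite par_a (negbTE a_neq_x) (negbTE c_neq_x).
by have [->|_] := eqVneq y c; rewrite ?(rs_par_root rs) // (negbTE a_neq_x) (negbTE c_neq_x).
Qed.

Lemma reroot_spanner : rooted_spanner e a (reroot_par c a par) (reroot_dep a par dep).
Proof.
have c_neq : c != a by rewrite eq_sym.
split.
- by rewrite /reroot_par eqxx.
- by rewrite /reroot_dep branch_head eqxx dep_head.
- move=> x x_neq; rewrite /reroot_par (negbTE x_neq).
  have [-> {x x_neq}|x_neq_c] := eqVneq x c.
    rewrite /reroot_dep branch_head eqxx dep_head (branch_root rs) (negbTE c_neq).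
    by rewrite (rs_dep_root rs); split; rewrite // e_sym -{1}par_a (rs_edge rs).
  split; last exact: (rs_edge rs).
  have dep_x := rs_dep rs x_neq_c.
  rewrite /reroot_dep; have [branch_x|branch_x] := eqVneq (branch par dep x) a.
    have dep_par_x : 0 < dep (par x).
      rewrite lt0n; apply: contra_neq x_neq => dep0.
      by rewrite -branch_x /branch dep_x dep0; exact: erefl.
    by rewrite (branch_par rs) // branch_x eqxx dep_x prednK.
  have [par_x|par_x] := eqVneq (par x) c.
    by rewrite par_x (branch_root rs) (negbTE c_neq) dep_x par_x (rs_dep_root rs).
  by rewrite (branch_par rs) ?(negbTE branch_x) ?dep_x // (rs_dep rs par_x).
- move=> x y x_y; apply/dist_le_parent_relP.
  have /dist_le_parent_relP := rs_meets rs x_y.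
  by apply: dist_le_sub => u v; rewrite parent_rel_reroot.
Qed.

End Reroot.

(** Rooting a tree *)

Section BreadthFirst.
Variables (V : finType) (t : rel V) (c : V).

Lemma exists_bfs_depth : connected t -> exists dep : V -> nat,
  [/\ dep c = 0, forall x y, t x y -> dep y <= (dep x).+1 &
      forall x, x != c -> exists2 y, t y x & dep x = (dep y).+1].
Proof.
move=> t_conn.
pose walkb n x := [exists p : n.-tuple V, path t c p && (last c p == x)].
have walkbP n x : reflect (walk t c x n) (walkb n x).
  apply: (iffP existsP) => [[p /andP [p_path /eqP p_last]]|[p [p_size p_path p_last]]].
    by exists p; rewrite size_tuple.
  have p_size' : size p == n by apply/eqP.
  by exists (Tuple p_size'); rewrite /= p_path p_last eqxx.
have reach x : exists n, walkb n x.
  by have [_ [n [_ /walkbP w]]] := t_conn c x; exists n.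
pose dep x := ex_minn (reach x).
have dep_walk x : walk t c x (dep x) by apply/walkbP; rewrite /dep; case: ex_minnP.
have dep_min x n : walk t c x n -> dep x <= n.
  by move/walkbP; rewrite /dep; case: ex_minnP => m _; apply.
have dep_edge x y : t x y -> dep y <= (dep x).+1.
  move=> t_xy; apply: dep_min; rewrite -addn1; apply: walk_cat (dep_walk x) _.
  by exists [:: y]; rewrite /= t_xy.
exists dep; split => //.
  by apply/eqP; rewrite -leqn0; apply: dep_min; exists [::].
move=> x x_neq; have [p [p_size p_path p_last]] := dep_walk x.
case/lastP: p p_size p_path p_last => [|q y].
  by move=> _ _ /= x_c; rewrite x_c eqxx in x_neq.
rewrite size_rcons rcons_path last_rcons => q_size /andP [q_path t_y] y_x; subst y.
exists (last c q) => //.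
have le_q : dep (last c q) <= size q by apply: dep_min; exists q.
by have := dep_edge _ _ t_y; lia.
Qed.

Lemma exists_bfs_parent : connected t -> exists (par : V -> V) (dep : V -> nat),
  [/\ par c = c, dep c = 0, forall x, x != c -> dep x = (dep (par x)).+1 /\ t (par x) x
    & forall x y, t x y -> dep y <= (dep x).+1].
Proof.
move=> /exists_bfs_depth [dep [dep_root dep_edge dep_down]].
pose par x := if x == c then c else odflt c [pick y | t y x && (dep x == (dep y).+1)].
exists par, dep; split => //; first by rewrite /par eqxx.
move=> x x_neq; rewrite /par (negbTE x_neq).
case: pickP => [y /andP [t_yx /eqP dep_x] | none] //=.
by have [y t_yx dep_x] := dep_down x x_neq; have := none y; rewrite /= t_yx dep_x eqxx.
Qed.

End BreadthFirst.

Section TreeParent.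
Variables (V : finType) (t : rel V) (c : V) (par : V -> V) (dep : V -> nat).
Hypotheses (t_sym : symmetric t) (t_irr : irreflexive t) (t_acyc : acyclic t).
Hypotheses (par_root : par c = c) (dep_root : dep c = 0).
Hypothesis par_dep : forall x, x != c -> dep x = (dep (par x)).+1 /\ t (par x) x.
Hypothesis dep_edge : forall x y, t x y -> dep y <= (dep x).+1.

(* Makes the depth lemmas about rooted spanners available here. *)
Let rs : rooted_spanner (parent_rel par) c par dep.
Proof.
split => //.
- move=> x x_neq; have [dep_x _] := par_dep x_neq; split => //.
  rewrite /parent_rel eqxx /= andbT; apply/eqP => x_par.
  by move: dep_x; rewrite -x_par; lia.
- by move=> x y /andP [_ /orP [/eqP <-|/eqP <-]]; [exists 1, 0 | exists 0, 1].
Qed.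

Lemma path_to_ancestor k z : k <= dep z -> path t z (traject par (par z) k).
Proof.
elim: k z => [//|k IH] z le_k /=.
have z_neq : z != c by apply/eqP => z_c; move: le_k; rewrite z_c dep_root.
have [dep_z t_z] := par_dep z_neq.
by rewrite t_sym t_z /=; apply: IH; lia.
Qed.

Lemma path_from_ancestor k z : k <= dep z -> path t (iter k par z) (rev (traject par z k)).
Proof.
elim: k => [//|k IH] le_k.
rewrite trajectSr rev_rcons /= IH ?andbT; last lia.
have z_neq : iter k par z != c.
  by apply/eqP => z_c; have := dep_iter rs k z; rewrite z_c dep_root; lia.
by have [_ ->] := par_dep z_neq.
Qed.

Lemma traject_par_uniq k z : k <= (dep z).+1 -> uniq (traject par z k).
Proof.
elim: k z => [//|k IH] z le_k /=.
rewrite IH ?andbT; last first.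
  case: k {IH} le_k => [//|k] le_k.
  have z_neq : z != c by apply/eqP => z_c; move: le_k; rewrite z_c dep_root.
  by have [dep_z _] := par_dep z_neq; lia.
apply/negP => /trajectP [m lt_mk z_eq].
case: k {IH} le_k lt_mk => [//|k] le_k lt_mk.
by have := dep_iter rs m (par z); rewrite -z_eq (dep_par rs); lia.
Qed.

Lemma edge_ancestor x y j : t x y -> x = iter j par y -> j <= dep y -> x = y \/ x = par y.
Proof.
move=> t_xy x_eq le_j; case: j x_eq le_j => [|[|j]] x_eq le_j; [by left | by right |].
by have := dep_edge t_xy; have := dep_iter rs j.+2 y; rewrite -x_eq; lia.
Qed.

Lemma first_meeting x y : exists i j,
  [/\ iter i par x = iter j par y, i <= dep x, j <= dep y &
      forall a b, iter a par x = iter b par y -> i + j <= a + b].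
Proof.
pose meet s := [exists i : 'I_s.+1, iter i par x == iter (s - i) par y].
have meetI a b : iter a par x = iter b par y -> meet (a + b).
  move=> ab; apply/existsP; exists (Ordinal (leq_addr b a : a < (a + b).+1)).
  by rewrite /= addKn ab.
have meet_ex : exists s, meet s by exists (dep x + dep y); apply: meetI; rewrite !(iter_dep rs).
have [s /existsP [[i lt_is] /= /eqP meet_i] s_min] := ex_minnP meet_ex.
have s_le a b : iter a par x = iter b par y -> s <= a + b by move/meetI/s_min.
exists i, (s - i); split => //.
- rewrite leqNgt; apply/negP => lt_i.
  have := s_le (dep x) (s - i); rewrite (iter_dep rs) -meet_i (iter_dep_ge rs); last exact: ltnW.
  by move/(_ erefl); lia.
- rewrite leqNgt; apply/negP => lt_j.
  have := s_le i (dep y); rewrite (iter_dep rs) meet_i (iter_dep_ge rs); last exact: ltnW.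
  by move/(_ erefl); lia.
- by move=> a b /s_le; lia.
Qed.

(* A tree edge that is not a parent edge would close a cycle with the tree
   paths from its ends to their first common ancestor. *)
Lemma tree_edge_parent : subrel t (parent_rel par).
Proof.
move=> x y t_xy; have t_yx : t y x by rewrite t_sym.
have x_neq_y : x != y by apply: contraTneq t_xy => ->; rewrite t_irr.
rewrite /parent_rel x_neq_y /=; apply/negPn/negP; rewrite negb_or => /andP [par_x par_y].
have [i [j [meet le_i le_j i_min]]] := first_meeting x y.
have i_gt0 : 0 < i.
  case: i meet le_i i_min => // meet _ _.
  have [x_y|x_par] := edge_ancestor t_xy meet le_j.
    by rewrite x_y eqxx in x_neq_y.
  by rewrite x_par eqxx in par_y.
have j_gt0 : 0 < j.
  case: j meet le_j i_min => // meet _ _.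
  have [y_x|y_par] := edge_ancestor t_yx (esym meet) le_i.
    by rewrite y_x eqxx in x_neq_y.
  by rewrite y_par eqxx in par_x.
pose p := traject par (par x) i ++ rev (traject par y j).
have p_path : path t x p.
  rewrite cat_path path_to_ancestor // last_traject meet /=.
  exact: path_from_ancestor.
have p_last : last x p = y.
  by rewrite last_cat -(prednK j_gt0) trajectS rev_cons last_rcons.
have p_uniq : uniq (x :: p).
  rewrite /p -cat_cons cat_uniq rev_uniq (traject_par_uniq (k := i.+1)) /=; last lia.
  rewrite (traject_par_uniq (k := j)) ?andbT; last lia.
  apply/hasPn => z; rewrite mem_rev => /trajectP [b lt_bj ->].
  apply/negP => /(@trajectP _ _ x i.+1) [a lt_ai meet_ab].
  by have := i_min a b (esym meet_ab); lia.
have p_size : 1 < size p by rewrite size_cat size_rev !size_traject; lia.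
by have := t_acyc p_uniq p_size p_path; rewrite p_last t_yx.
Qed.

End TreeParent.

Lemma rooted_spanner_of_tree (V : finType) (e t : rel V) (c : V) :
  symmetric e -> tree_3_spanner e t -> exists par dep, rooted_spanner e c par dep.
Proof.
move=> e_sym [[[t_sym t_irr] t_sub t_conn t_acyc] t_stretch].
have [par [dep [par_root dep_root par_dep dep_edge]]] := exists_bfs_parent c t_conn.
have t_parent := tree_edge_parent t_sym t_irr t_acyc par_root dep_root par_dep dep_edge.
exists par, dep; split => //.
- move=> x x_neq; have [dep_x t_x] := par_dep x x_neq.
  by split => //; rewrite e_sym; apply: t_sub.
- move=> x y e_xy; apply/dist_le_parent_relP.
  exact: dist_le_sub t_parent (t_stretch x y 1 (dist_le_edge e_xy)).
Qed.

(** Decreasing the diameter bound *)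

Section Decrease.
Variables (V : finType) (e : rel V) (c : V) (par : V -> V) (dep : V -> nat).
Hypothesis rs : rooted_spanner e c par dep.
Hypotheses (e_irr : irreflexive e) (e_sym : symmetric e) (e_diam : diam_le e 3).
Local Notation H := (height dep).

Lemma dep_le_height x : dep x <= H.
Proof. exact: leq_bigmax. Qed.

Lemma leaf_height a : 0 < dep a -> dep a = H -> leaf par a.
Proof.
move=> dep_a top_a z; apply/eqP => par_z.
have z_neq : z != c.
  by apply: contraTneq dep_a => z_c; rewrite -par_z z_c (rs_par_root rs) (rs_dep_root rs).
by have := dep_le_height z; rewrite (rs_dep rs z_neq) par_z top_a ltnn.
Qed.

Lemma leaf_siblings_height a : 1 < dep a -> dep a = H -> leaf_siblings par a.
Proof.
move=> dep_a top_a z par_z; have [dep_z _] := sibling rs dep_a par_z.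
by apply: leaf_height; rewrite dep_z //; apply: ltnW.
Qed.

Lemma reattach_lowers_height : 2 < H -> (forall a, dep a = H -> ~~ stuck e par a) ->
  exists par' dep', rooted_spanner e c par' dep' /\ height dep' < H.
Proof.
move=> H_gt2 free; pose M := level par dep H predT.
have M_leaf a : M a -> leaf par a by move/level_dep => top_a; apply: leaf_height; lia.
have M_free a : M a -> ~~ stuck e par a by move/level_dep/free.
exists (reattach_par e par M), (reattach_dep e par dep M).
split; first exact: reattach_spanner.
have lt_H x : reattach_dep e par dep M x < H.
  have [Mx|notMx] := boolP (M x).
    exact: leq_trans (reattach_dep_lt rs H_gt2 Mx) (dep_le_height x).
  rewrite reattach_dep_notM // ltn_neqAle dep_le_height andbT.
  by move: notMx; rewrite /M /level /= andbT.
have: height (reattach_dep e par dep M) <= H.-1.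
  by apply/bigmax_leqP => x _; have := lt_H x; lia.
by lia.
Qed.

(* By [stuck_same_branch] the deepest leaves outside the branch of [a0] are
   free; once they are re-hung, all deepest vertices lie in that branch. *)
Lemma reattach_off_branch a0 : 2 < H -> dep a0 = H -> stuck e par a0 ->
  exists par' dep', rooted_spanner e c par' dep' /\ diam_bound par' dep' <= H.*2.-1.
Proof.
move=> H_gt2 top_a0 stuck_a0; set b0 := branch par dep a0.
pose M := level par dep H (predC1 b0).
have M_leaf a : M a -> leaf par a by move/level_dep => top_a; apply: leaf_height; lia.
have M_free a : M a -> ~~ stuck e par a.
  case/andP => /eqP top_a /= diff; apply: contraNN diff => stuck_a; apply/eqP.
  apply: (stuck_same_branch rs e_irr e_diam e_sym) stuck_a _ _ stuck_a0; try lia;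
    apply: leaf_siblings_height; lia.
exists (reattach_par e par M), (reattach_dep e par dep M).
split; first exact: reattach_spanner.
apply: (diam_bound_one_branch (b := b0)).
  exact: (height_reattach rs (predC1 b0) H_gt2).
move=> x top_x; have notMx : ~~ M x.
  apply/negP => Mx; have := reattach_dep_lt rs H_gt2 Mx; rewrite top_x.
  by have := dep_le_height x; lia.
have top_x' : dep x = H by rewrite -(reattach_dep_notM e notMx).
rewrite (branch_reattach e M_leaf notMx).
by move: notMx; rewrite /M /level /= top_x' eqxx andTb negbK => /eqP.
Qed.

Lemma leaf_below_top a b : 1 < H -> (forall x, dep x = H -> branch par dep x = b) ->
  dep a = H.-1 -> branch par dep a != b -> leaf par a.
Proof.
move=> H_gt1 top_branch dep_a diff z; apply/eqP => par_z.
have z_neq : z != c.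
  by apply/eqP => z_c; move: dep_a; rewrite -par_z z_c (rs_par_root rs) (rs_dep_root rs); lia.
have dep_z : dep z = H by rewrite (rs_dep rs z_neq) par_z dep_a; lia.
have branch_z : branch par dep z = branch par dep a.
  by rewrite -par_z (branch_par rs) // par_z dep_a; lia.
by move: diff; rewrite -branch_z top_branch // eqxx.
Qed.

(* The leaves of depth [H - 1] outside the branch of [a0] are free: re-hang
   them and reroot at the head of that branch. *)
Lemma reattach_reroot a0 : 3 < H -> dep a0 = H -> stuck e par a0 ->
  (forall x, dep x = H -> branch par dep x = branch par dep a0) ->
  exists c' par' dep', rooted_spanner e c' par' dep' /\ height dep' < H.
Proof.
move=> H_gt3 top_a0 stuck_a0 top_branch.
have H1_gt2 : 2 < H.-1 by lia.
pose M := level par dep H.-1 (predC1 (branch par dep a0)).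
have M_leaf a : M a -> leaf par a.
  by case/andP => /eqP dep_a /= diff; apply: leaf_below_top top_branch _ diff; lia.
have M_free a : M a -> ~~ stuck e par a.
  move=> Ma; have dep_a := level_dep Ma; move: (Ma) => /andP [_ /= diff].
  apply: contraNN diff => stuck_a; apply/eqP.
  apply: (stuck_same_branch rs e_irr e_diam e_sym) stuck_a _ _ stuck_a0; try lia.
    exact: (level_leaf_siblings (keep := predC1 (branch par dep a0)) rs H1_gt2 M_leaf Ma).
  by apply: leaf_siblings_height; lia.
have rs1 := reattach_spanner rs e_irr e_sym H1_gt2 M_leaf M_free; rewrite -/M in rs1.
have a0_neq : a0 != c by apply: (dep_gt0 rs); lia.
have dep_b0 := dep_branch rs a0_neq.
have head_neq : branch par dep a0 != c by apply: (dep_gt0 rs); rewrite dep_b0.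
have notM_head : ~~ M (branch par dep a0) by rewrite /M /level /= dep_b0; case: eqP => //; lia.
have par1_head : reattach_par e par M (branch par dep a0) = c.
  by rewrite reattach_par_notM // (par_branch rs a0_neq).
have rs2 := reroot_spanner rs1 e_sym head_neq par1_head.
do 3 eexists; split; first exact: rs2.
pose dep2 := reroot_dep (branch par dep a0) (reattach_par e par M) (reattach_dep e par dep M).
have le_H x : dep2 x <= H.-1.
  rewrite /dep2 /reroot_dep; case: eqP => [_|branch_x].
    have := reattach_dep_le rs (predC1 (branch par dep a0)) H1_gt2 x; rewrite -/M.
    by have := dep_le_height x; lia.
  have [Mx|notMx] := boolP (M x).
    by have := reattach_dep_lt rs H1_gt2 Mx; rewrite -/M (level_dep Mx); lia.
  move: branch_x; rewrite reattach_dep_notM // branch_reattach // => branch_x.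
  have not_top : dep x != H by apply: contra_not_neq branch_x; apply: top_branch.
  have not_top1 : dep x != H.-1.
    by apply: contraNneq notMx => dep_x; rewrite /M /level /= dep_x eqxx; apply/eqP.
  by have := dep_le_height x; lia.
have : height dep2 <= H.-1 by apply/bigmax_leqP => x _; apply: le_H.
by rewrite /dep2; lia.
Qed.

Lemma diam_bound_decrease : 5 < diam_bound par dep ->
  exists c' par' dep',
    rooted_spanner e c' par' dep' /\ diam_bound par' dep' < diam_bound par dep.
Proof.
move=> bound_gt5; have bound_le := diam_bound_le par dep.
have bound_ge := diam_bound_ge par dep.
have H_gt2 : 2 < H by move: bound_le; rewrite -muln2; lia.
have lower (par' : V -> V) dep' : height dep' < H -> diam_bound par' dep' < diam_bound par dep.
  by move=> lt_H; have := diam_bound_le par' dep'; move: bound_ge; rewrite -!muln2; lia.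
case: (pickP [pred a | (dep a == H) && stuck e par a]) => [a0 /andP [/eqP top_a0 stuck_a0]|none].
  case two: (two_deep_branches par dep).
    have [par' [dep' [rs' bound']]] := reattach_off_branch H_gt2 top_a0 stuck_a0.
    exists c, par', dep'; split => //; move: bound'; rewrite /diam_bound two -!muln2.
    by case: ifP => _; lia.
  have top_branch x : dep x = H -> branch par dep x = branch par dep a0.
    move=> top_x; apply/eqP; apply: contraFT two => diff.
    by apply/existsP; exists x; apply/existsP; exists a0; rewrite top_x top_a0 eqxx.
  have H_gt3 : 3 < H by move: bound_gt5; rewrite /diam_bound two -muln2; lia.
  have [c' [par' [dep' [rs' lt_H]]]] := reattach_reroot H_gt3 top_a0 stuck_a0 top_branch.
  by exists c', par', dep'; split => //; apply: lower.
have free a : dep a = H -> ~~ stuck e par a.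
  by move=> top_a; apply/negP => stuck_a; have := none a; rewrite /= top_a eqxx stuck_a.
have [par' [dep' [rs' lt_H]]] := reattach_lowers_height H_gt2 free.
by exists c, par', dep'; split => //; apply: lower.
Qed.

End Decrease.

Lemma rooted_spanner_small_bound (V : finType) (e : rel V) (c : V) (par : V -> V)
    (dep : V -> nat) :
  simple_graph e -> diam_le e 3 -> rooted_spanner e c par dep ->
  exists c' par' dep', rooted_spanner e c' par' dep' /\ diam_bound par' dep' <= 5.
Proof.
move=> [e_sym e_irr] e_diam; have [n] := ubnP (diam_bound par dep).
elim: n c par dep => [//|n IH] c par dep lt_n rs.
have [le5|gt5] := leqP (diam_bound par dep) 5; first by exists c, par, dep.
have [c' [par' [dep' [rs' lt_bound]]]] := diam_bound_decrease rs e_irr e_sym e_diam gt5.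
exact: IH _ _ _ (leq_trans lt_bound lt_n) rs'.
Qed.

Theorem lemma7 (V : finType) (e : rel V) :
  simple_graph e -> diam_le e 3 ->
  (exists t : rel V, tree_3_spanner e t) ->
  exists t : rel V, tree_3_spanner e t /\ diam_le t 5.
Proof.
move=> e_simple e_diam [t t_spanner].
have [c _|V_empty] := pickP (@predT V); last by exists t; split => // x; have := V_empty x.
have e_sym := e_simple.1.
have [par [dep rs]] := rooted_spanner_of_tree c e_sym t_spanner.
have [c' [par' [dep' [rs' small]]]] := rooted_spanner_small_bound e_simple e_diam rs.
exists (parent_rel par'); split; first exact: parent_rel_spanner rs' e_sym.
by move=> x y; apply: dist_leW small (parent_rel_diam rs' x y).
Qed.
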